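(* Let $n\geq 1$. Choose edges of the complete bipartite graph $K_{n,n}$ one at a time in a uniformly random order (without repetition), stopping as soon as every vertex has degree at least one; call the resulting random graph $G_\omega$. Then the expected number of perfect matchings contained in $G_\omega$ is $$n!\left(\frac{2}{\binom{2n-1}{n}} - \frac{1}{\binom{3n-2}{n}}\right).$$
   Context: Precisely: a uniformly random ordering $(e_1,\dots,e_{n^2})$ of the edges of $K_{n,n}$ is chosen, $k$ is the least index such that the graph on all $2n$ vertices with edges $e_1,\dots,e_k$ has no isolated vertex, and $G_\omega$ is that graph. A perfect matching is a set of edges such that every vertex lies in exactly one of them. *)

From mathcomp Require Import all_boot all_order all_algebra.
Set Implicit Arguments. Unset Strict Implicit. Unset Printing Implicit Defensive.

(* Edges of K_{n,n}: a pair (i, j) joins left vertex i to right vertex j. *)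
Definition edge (n : nat) := ('I_n * 'I_n)%type.

(* An ordering (e_1, ..., e_{n^2}) of the edges: an injective (hence bijective)
   map from positions 'I_(n*n) to edges.  Position p : 'I_(n*n) holds e_{p+1}. *)
Definition ordering (n : nat) := {ffun 'I_(n * n) -> edge n}.
Definition is_ordering n (o : ordering n) : bool := injectiveb o.

Definition no_isolated n (o : ordering n) (k : nat) : bool :=
  [forall i : 'I_n, exists p : 'I_(n * n), (p < k) && ((o p).1 == i)] &&
  [forall j : 'I_n, exists p : 'I_(n * n), (p < k) && ((o p).2 == j)].

Definition stop_time n (o : ordering n) : nat :=
  find (no_isolated o) (iota 0 (n * n).+1).

Definition G_omega n (o : ordering n) : {set edge n} :=
  [set o p | p : 'I_(n * n) & p < stop_time o].

Definition perfect_matching n (M : {set edge n}) : bool :=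
  [forall i : 'I_n, #|[set e in M | e.1 == i]| == 1] &&
  [forall j : 'I_n, #|[set e in M | e.2 == j]| == 1].

Definition num_pm_in n (G : {set edge n}) : nat :=
  #|[set M : {set edge n} | (M \subset G) && perfect_matching M]|.

Definition expected_pm (n : nat) : rat :=
  ((\sum_(o : ordering n | is_ordering o) (num_pm_in (G_omega o))%:R) /
   (#|[pred o : ordering n | is_ordering o]|)%:R)%R.

From mathcomp Require Import all_boot all_order all_algebra fingroup perm ring zify.
Set Implicit Arguments. Unset Strict Implicit. Unset Printing Implicit Defensive.
Import GRing.Theory Num.Theory.

(* Perfect matchings of K_{n,n} are the sets M_s = {(i, s i)} for permutations s.  Such an
   M_s lies in G_omega exactly when, at the arrival of its last edge e, an endpoint of e is
   still isolated: the n - 1 other edges of M_s come before e, and the n - 1 other edges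
   through one endpoint of e all come after it.  Since the relative order of any fixed set of
   edges is uniform, a pattern "the set S before e before the set U" has probability
   |S|! |U|! / (|S| + |U| + 1)!.  Inclusion-exclusion over the two endpoints and summation
   over the n choices of e and the n! matchings give
   n! n (2 (n-1)!^2 / (2n-1)! - (n-1)! (2n-2)! / (3n-2)!), the stated binomial expression. *)

Lemma index_filter_ltE (T : eqType) (a : pred T) (s : seq T) x y :
  a x -> a y -> (index x (filter a s) < index y (filter a s)) = (index x s < index y s).
Proof.
move=> ax ay; elim: s => [|z s IHs] //=.
have [zx|zx] := eqVneq z x; first by subst z; rewrite ax /= eqxx; case: (x == y).
have [zy|zy] := eqVneq z y; first by subst z; rewrite ay /= eqxx (negbTE zx).
by case: (a z); rewrite /= ?(negbTE zx) ?(negbTE zy) ?ltnS.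
Qed.

Lemma uniq_size_perm_enum (T : finType) (s : seq T) :
  uniq s -> size s = #|T| -> perm_eq s (enum T).
Proof.
move=> s_uniq s_size; apply: uniq_perm => [//||x]; first exact: enum_uniq.
have /subset_cardP sT : #|mem s| = #|(predT : pred T)| by rewrite (card_uniqP s_uniq).
by rewrite mem_enum -(sT (subset_predT _) x).
Qed.

Lemma relabel_perm_eq (T : eqType) (v v' : seq T) : uniq v -> perm_eq v v' ->
  exists g : T -> T, [/\ injective g, map g v = v' & {in [predC v], g =1 id}].
Proof.
move=> v_uniq vv'; have v_size := perm_size vv'; have v_mem := perm_mem vv'.
have [v0 | [x0 _]] : v = [::] \/ exists x0 : T, x0 \in v.
    by case: (v) => [|y w]; [left | right; exists y; exact: mem_head].
  by exists id; split=> //; move: v_size; rewrite v0 => /esym/size0nil.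
pose g x := if x \in v then nth x v' (index x v) else x.
have g_in x : x \in v -> g x \in v.
  by move=> xv; rewrite /g xv v_mem mem_nth // -v_size index_mem.
exists g; split=> [x y|| x /negbTE xv]; last by rewrite /g xv.
  have [xv|xv] := boolP (x \in v); have [yv|yv] := boolP (y \in v).
  - rewrite /g xv yv => gxy; apply: (index_inj x xv yv); apply/eqP.
    rewrite -(nth_uniq x _ _ (etrans (esym (perm_uniq vv')) v_uniq)) -?v_size ?index_mem //.
    by rewrite gxy (set_nth_default x) // -v_size index_mem.
  - by move=> gxy; move: (g_in x xv); rewrite gxy /g (negbTE yv) (negbTE yv).
  - by move=> gxy; move: (g_in y yv); rewrite -gxy /g (negbTE xv) (negbTE xv).
  - by rewrite /g (negbTE xv) (negbTE yv).
apply: (@eq_from_nth _ x0); rewrite size_map // => i i_lt.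
rewrite (nth_map x0) // /g mem_nth // index_uniq //.
by apply: set_nth_default; rewrite -v_size.
Qed.

Lemma count_sum (I : Type) (a : pred I) (s : seq I) : count a s = \sum_(x <- s) a x.
Proof. by elim: s => [|x s IHs]; rewrite ?big_nil ?big_cons //= IHs. Qed.

Section RestrictPermutations.
Variables (T : finType) (W : {set T}).

Local Notation orders := (permutations (enum T)).
Local Notation restrict l := [seq x <- l | x \in W].

Lemma perm_restrict l : l \in orders -> perm_eq (restrict l) (enum W).
Proof.
rewrite mem_permutations => lT.
have l_uniq : uniq l by rewrite (perm_uniq lT) enum_uniq.
apply: uniq_perm => [|| x]; rewrite ?enum_uniq ?filter_uniq //.
by rewrite mem_filter (perm_mem lT) !mem_enum andbT.
Qed.

(* Relabelling along a permutation of [T] that moves [v] onto [v'] and preserves [W]. *)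
Lemma count_restrict_le v v' : uniq v -> perm_eq v v' -> {subset v <= W} ->
  count (fun l => restrict l == v) orders <= count (fun l => restrict l == v') orders.
Proof.
move=> v_uniq vv' vW; have [g [g_inj gv gid]] := relabel_perm_eq v_uniq vv'.
have gW x : (g x \in W) = (x \in W).
  have [xv|xv] := boolP (x \in v); last by rewrite gid.
  by rewrite !vW // (perm_mem vv') -gv map_f.
rewrite -!size_filter -(size_map (map g)); apply: uniq_leq_size.
  by rewrite (map_inj_uniq (inj_map g_inj)) filter_uniq ?permutations_uniq.
move=> y /mapP[l]; rewrite mem_filter => /andP[/eqP lv lT] ->.
rewrite mem_filter filter_map (eq_filter gW) lv gv eqxx /=.
rewrite mem_permutations in lT; rewrite mem_permutations.
apply: uniq_size_perm_enum; rewrite ?size_map ?(perm_size lT) -?cardE //.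
by rewrite (map_inj_uniq g_inj) (perm_uniq lT) enum_uniq.
Qed.

Lemma count_restrict_enum v : v \in permutations (enum W) ->
  count (fun l => restrict l == v) orders = count (fun l => restrict l == enum W) orders.
Proof.
rewrite mem_permutations => vW.
have v_uniq : uniq v by rewrite (perm_uniq vW) enum_uniq.
have v_sub : {subset v <= W} by move=> x; rewrite (perm_mem vW) mem_enum.
apply/eqP; rewrite eqn_leq !count_restrict_le ?enum_uniq // 1?perm_sym //.
by move=> x; rewrite mem_enum.
Qed.

Lemma count_restrict (Q : pred (seq T)) :
  count (fun l => Q (restrict l)) orders * #|W|`! = #|T|`! * count Q (permutations (enum W)).
Proof.
pose c := count (fun l => restrict l == enum W) orders.
have count_restrictE (P : pred (seq T)) :
    count (fun l => P (restrict l)) orders = c * count P (permutations (enum W)).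
  have split_restrict l : l \in orders ->
      P (restrict l) = \sum_(w <- permutations (enum W)) P w * (restrict l == w) :> nat.
    move=> lT; rewrite (bigD1_seq (restrict l)) ?permutations_uniq //=; last first.
      by rewrite mem_permutations perm_restrict.
    by rewrite eqxx muln1 big1 ?addn0 // => w; rewrite eq_sym => /negbTE ->; rewrite muln0.
  rewrite count_sum (eq_big_seq _ split_restrict) exchange_big /= count_sum big_distrr /=.
  apply: eq_big_seq => w wW; rewrite -big_distrr /= -(count_sum (fun l => restrict l == w)).
  by rewrite count_restrict_enum // mulnC.
have := count_restrictE predT; rewrite !count_predT !size_permutations ?enum_uniq //.
rewrite -!cardE => ->.
by rewrite count_restrictE mulnAC.
Qed.

End RestrictPermutations.

Definition separated (T : finType) (S U : {set T}) (e : T) (l : seq T) :=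
  [forall x in S, index x l < index e l] && [forall x in U, index e l < index x l].

Section Separated.
Variables (T : finType) (S U : {set T}) (e : T).
Hypotheses (eS : e \notin S) (eU : e \notin U) (SU : [disjoint S & U]).

Let W := e |: (S :|: U).

Lemma perm_enum_pivot : perm_eq (enum S ++ e :: enum U) (enum W).
Proof.
apply: uniq_perm => [|| x]; rewrite ?enum_uniq //.
  rewrite cat_uniq /= !enum_uniq !mem_enum (negbTE eS) eU /= andbT.
  by apply/hasPn => x; rewrite !mem_enum => xU; rewrite (disjointFl SU xU).
by rewrite mem_cat in_cons !mem_enum !inE orbCA.
Qed.

Lemma separated_pivot s u : perm_eq s (enum S) -> perm_eq u (enum U) ->
  separated S U e (s ++ e :: u).
Proof.
move=> /perm_mem sS /perm_mem uU.
have es : e \notin s by rewrite sS mem_enum.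
rewrite /separated index_pivot //; apply/andP; split; apply/forall_inP => x xSU.
  by rewrite index_cat sS mem_enum xSU index_mem sS mem_enum.
have xs : x \notin s by rewrite sS mem_enum (disjointFl SU xSU).
have ex : e != x by apply: contraNneq eU => ->.
by rewrite index_cat (negbTE xs) /= (negbTE ex) addnS ltnS leq_addr.
Qed.

Lemma pivot_separated w : perm_eq w (enum W) -> separated S U e w ->
  w \in [seq s ++ e :: u | s <- permutations (enum S), u <- permutations (enum U)].
Proof.
move=> wW /andP[/forall_inP Sw /forall_inP Uw].
have w_mem x : (x \in w) = (x \in W) by rewrite (perm_mem wW) mem_enum.
have ew : e \in w by rewrite w_mem !inE eqxx.
set k := index e w; set s := take k w; set u := drop k.+1 w.
have wE : w = s ++ e :: u by rewrite -drop_index // cat_take_drop.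
have sS : perm_eq s (enum S).
  apply: uniq_perm => [|| x]; rewrite ?enum_uniq ?take_uniq ?(perm_uniq wW) ?enum_uniq //.
  rewrite mem_enum; apply/idP/idP => [xs | xS]; last first.
    by rewrite in_take ?Sw // w_mem !inE xS orbT.
  have xw := mem_take xs; rewrite in_take // -/k in xs.
  move: xw; rewrite w_mem !inE => /or3P[/eqP xe | // | xU].
    by rewrite xe ltnn in xs.
  by have := ltn_trans xs (Uw x xU); rewrite ltnn.
have uU : perm_eq u (enum U).
  have wSU : perm_eq (s ++ e :: u) (enum S ++ e :: enum U).
    by rewrite -wE (perm_trans wW) // perm_sym perm_enum_pivot.
  by rewrite (perm_catr _ sS) perm_cat2l perm_cons in wSU.
by rewrite wE; apply/allpairsP; exists (s, u); rewrite !mem_permutations.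
Qed.

Lemma count_separated_enum :
  count (separated S U e) (permutations (enum W)) = #|S|`! * #|U|`!.
Proof.
pose pivots := [seq s ++ e :: u | s <- permutations (enum S), u <- permutations (enum U)].
have -> : #|S|`! * #|U|`! = size pivots.
  by rewrite size_allpairs !size_permutations ?enum_uniq // -!cardE.
have eNperm s : s \in permutations (enum S) -> e \notin s.
  by rewrite mem_permutations => /perm_mem ->; rewrite mem_enum.
rewrite -size_filter; apply/perm_size/uniq_perm => [|| w].
- by rewrite filter_uniq ?permutations_uniq.
- apply: allpairs_uniq; rewrite ?permutations_uniq //.
  move=> [s1 u1] [s2 u2] /allpairsP[[? ?] /= [s1S _ [-> _]]].
  move=> /allpairsP[[? ?] /= [s2S _ [-> _]]] /= /eqP.
  by rewrite eqseq_pivot2l ?eNperm // => /andP[/eqP-> /eqP->].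
rewrite mem_filter mem_permutations; apply/andP/idP => [[sep wW] | ].
  exact: pivot_separated.
case/allpairsP => -[s u] /=; rewrite !mem_permutations => -[sS uU ->].
split; first exact: separated_pivot.
by apply: perm_trans perm_enum_pivot; rewrite perm_cat // perm_cons.
Qed.

Lemma count_separated :
  count (separated S U e) (permutations (enum T)) * (#|S| + #|U|).+1`!
  = #|T|`! * (#|S|`! * #|U|`!).
Proof.
have cardW : #|W| = (#|S| + #|U|).+1.
  by rewrite cardsU1 !inE negb_or eS eU cardsU (disjoint_setI0 SU) cards0 subn0.
have restrictE l : separated S U e l = separated S U e [seq x <- l | x \in W].
  have eW : e \in W by rewrite !inE eqxx.
  by congr andb; apply: eq_forallb_in => x xSU; rewrite index_filter_ltE // !inE xSU ?orbT.
by rewrite (eq_count restrictE) -cardW count_restrict count_separated_enum.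
Qed.

End Separated.

Lemma perm_enum_fgraph (D T : finType) (o : {ffun D -> T}) :
  injectiveb o -> #|D| = #|T| -> perm_eq (fgraph o) (enum T).
Proof.
by move=> o_inj DT; apply: uniq_size_perm_enum; rewrite ?size_tuple // -codom_ffun.
Qed.

Lemma sum_injective_ffun (D T : finType) (F : seq T -> nat) : #|D| = #|T| ->
  \sum_(o : {ffun D -> T} | injectiveb o) F (fgraph o) = \sum_(l <- permutations (enum T)) F l.
Proof.
move=> DT; pose graph (o : {ffun D -> T}) := val (fgraph o).
rewrite (perm_big (map graph [seq o <- index_enum _ | injectiveb (o : {ffun D -> T})])).
  by rewrite big_map big_filter.
rewrite perm_sym; apply: uniq_perm => [|| l]; rewrite ?permutations_uniq //.
  rewrite map_inj_uniq ?filter_uniq ?index_enum_uniq // => o1 o2 /val_inj.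
  exact: (can_inj fgraphK).
rewrite mem_permutations; apply/mapP/idP => [[o] | lT].
  by rewrite mem_filter => /andP[o_inj _] ->; exact: perm_enum_fgraph.
have l_size : size l == #|D| by rewrite (perm_size lT) DT cardE.
exists (Finfun (Tuple l_size)); last by rewrite /graph FinfunK.
rewrite mem_filter mem_index_enum andbT.
have l_uniq : uniq l by rewrite (perm_uniq lT) enum_uniq.
by rewrite [injectiveb _]/(uniq (codom _)) codom_ffun FinfunK.
Qed.

Lemma card_injective_ffun (D T : finType) : #|D| = #|T| ->
  #|[pred o : {ffun D -> T} | injectiveb o]| = #|T|`!.
Proof.
move=> DT; rewrite -sum1_card (sum_injective_ffun (fun => 1)) // sum1_size.
by rewrite size_permutations ?enum_uniq // -cardE.
Qed.

Definition matching_of n (s : {perm 'I_n}) : {set edge n} := [set (i, s i) | i : 'I_n].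

Section PerfectMatchings.
Variable n : nat.

Lemma mem_matching_of (s : {perm 'I_n}) (x : edge n) : (x \in matching_of s) = (x.2 == s x.1).
Proof.
case: x => i j; apply/imsetP/eqP => [[k _ [-> ->]] // | /= ->].
by exists i.
Qed.

Lemma matching_of_inj : injective (@matching_of n).
Proof.
move=> s t st; apply/permP => i.
by apply/eqP; rewrite -[_ == _]/((i, s i).2 == t (i, s i).1) -mem_matching_of -st mem_matching_of.
Qed.

Lemma perfect_matching_of (s : {perm 'I_n}) : perfect_matching (matching_of s).
Proof.
apply/andP; split; apply/forallP => i; apply/cards1P.
  exists (i, s i); apply/setP => -[a b]; rewrite !inE mem_matching_of /= xpair_eqE.
  by have [->|] := eqVneq a i; rewrite ?andbF ?andbT //.
exists ((s^-1)%g i, i); apply/setP => -[a b]; rewrite !inE mem_matching_of /= xpair_eqE.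
have [->|] := eqVneq b i; rewrite ?andbF ?andbT //.
by apply/eqP/eqP => [->|->]; rewrite ?permK ?permKV.
Qed.

Lemma perfect_matchingP (M : {set edge n}) :
  perfect_matching M -> exists s : {perm 'I_n}, M = matching_of s.
Proof.
case/andP => /forallP rowM /forallP colM.
have mate i : {j | (i, j) \in M}.
  have /cards1P/sig_eqW[x /setP/(_ x)] := rowM i.
  by rewrite !inE eqxx => /andP[xM /eqP <-]; exists x.2; rewrite -surjective_pairing.
have unique_in (p : edge n -> 'I_n) x y : #|[set e in M | p e == p x]| == 1 ->
    x \in M -> y \in M -> p x = p y -> x = y.
  case/cards1P => z /setP zE xM yM pxy.
  by move: (zE x) (zE y); rewrite !inE xM yM pxy !eqxx /= => /esym/eqP -> /esym/eqP ->.
pose f i := sval (mate i).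
have f_inj : injective f.
  move=> i j fij.
  have := unique_in snd (i, f i) (j, f j) (colM (f i)) (svalP (mate i)) (svalP (mate j)).
  by rewrite /= fij => /(_ erefl) [].
exists (perm f_inj); apply/setP => -[i j]; rewrite mem_matching_of permE /=.
apply/idP/eqP => [ijM | ->]; last exact: svalP (mate i).
by have := unique_in fst (i, j) (i, f i) (rowM i) ijM (svalP (mate i)) erefl => -[].
Qed.

Lemma num_pm_inE (G : {set edge n}) :
  num_pm_in G = \sum_(s : {perm 'I_n}) (matching_of s \subset G).
Proof.
rewrite /num_pm_in.
have -> : [set M : {set edge n} | (M \subset G) && perfect_matching M] =
    @matching_of n @: [set s : {perm 'I_n} | matching_of s \subset G].
  apply/setP => M; rewrite inE; apply/andP/imsetP => [[MG /perfect_matchingP[s Ms]] | [s]].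
    by exists s; rewrite // inE -Ms.
  by rewrite inE => sG ->; split; last exact: perfect_matching_of.
rewrite card_imset; last exact: matching_of_inj.
by rewrite -sum1_card big_mkcond; apply: eq_bigr => s _; rewrite inE; case: (_ \subset _).
Qed.

End PerfectMatchings.

(* [no_isolated], [stop_time] and [G_omega] for the list [l] of all edges in order of
   arrival, the arrival time of [x] being [index x l]. *)
Definition covered_by n (p : edge n -> 'I_n) (l : seq (edge n)) k :=
  [forall i, exists x, (p x == i) && (index x l < k)].

Definition covering n (l : seq (edge n)) k := covered_by fst l k && covered_by snd l k.

Definition stopping_time n (l : seq (edge n)) := find (covering l) (iota 0 (n * n).+1).

Definition stopped_graph n (l : seq (edge n)) : {set edge n} :=
  [set x | index x l < stopping_time l].

Section OrderingAsSequence.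
Variables (n : nat) (o : ordering n).
Hypothesis o_inj : is_ordering o.
Let l : seq (edge n) := fgraph o.

Lemma perm_enum_ordering : perm_eq l (enum {: edge n}).
Proof. by apply: perm_enum_fgraph => //; rewrite card_prod !card_ord. Qed.

Lemma index_ordering (p : 'I_(n * n)) : index (o p) l = p.
Proof.
have l_uniq : uniq l by rewrite (perm_uniq perm_enum_ordering) enum_uniq.
by rewrite -(nth_fgraph_ord (o p) p) index_uniq ?size_tuple ?card_ord.
Qed.

Lemma exists_position (P : nat -> edge n -> bool) :
  [exists p : 'I_(n * n), P p (o p)] = [exists x, P (index x l) x].
Proof.
apply/existsP/existsP => [[p Pp] | [x Px]]; first by exists (o p); rewrite index_ordering.
have xl : x \in l by rewrite (perm_mem perm_enum_ordering) mem_enum.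
have x_lt : index x l < n * n by rewrite -(card_ord (n * n)) -(size_tuple (fgraph o)) index_mem.
by exists (Ordinal x_lt); rewrite -(nth_fgraph_ord x (Ordinal x_lt)) /= nth_index.
Qed.

Lemma no_isolatedE k : no_isolated o k = covering l k.
Proof.
congr andb; apply: eq_forallb => i.
  rewrite (exists_position (fun p x => (p < k) && (x.1 == i))).
  by apply: eq_existsb => x; rewrite andbC.
rewrite (exists_position (fun p x => (p < k) && (x.2 == i))).
by apply: eq_existsb => x; rewrite andbC.
Qed.

Lemma stop_timeE : stop_time o = stopping_time l.
Proof. by apply: eq_find => k; rewrite no_isolatedE. Qed.

Lemma G_omegaE : G_omega o = stopped_graph l.
Proof.
apply/setP => x; rewrite inE -stop_timeE.
have posE := exists_position (fun p y => (p < stop_time o) && (y == x)).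
apply/imsetP/idP => [[p] | x_lt]; first by rewrite inE => p_lt ->; rewrite index_ordering.
have /existsP[p /andP[p_lt /eqP <-]] : [exists p : 'I_(n * n), (p < stop_time o) && (o p == x)].
  by rewrite posE; apply/existsP; exists x; rewrite x_lt eqxx.
by exists p; rewrite ?inE.
Qed.
End OrderingAsSequence.

Definition line n (p : edge n -> 'I_n) (e : edge n) : {set edge n} :=
  [set x | (p x == p e) && (x != e)].

Section StoppingTime.
Variables (n : nat) (l : seq (edge n)).
Hypothesis l_perm : perm_eq l (enum {: edge n}).

Lemma mem_edge x : x \in l.
Proof. by rewrite (perm_mem l_perm) mem_enum. Qed.

Lemma index_edge_inj x y : index x l = index y l -> x = y.
Proof. exact: (index_inj x (mem_edge x) (mem_edge y)). Qed.

Lemma index_edge_lt x : index x l < n * n.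
Proof.
have -> : n * n = size l by rewrite (perm_size l_perm) -cardE card_prod card_ord.
by rewrite index_mem mem_edge.
Qed.

Lemma covered_by_mono p k k' : k <= k' -> covered_by p l k -> covered_by p l k'.
Proof.
move=> le_kk' /forallP cov; apply/forallP => i.
have /existsP[x /andP[px x_lt]] := cov i.
by apply/existsP; exists x; rewrite px (leq_trans x_lt).
Qed.

Lemma covering_full : covering l (n * n).
Proof.
by apply/andP; split; apply/forallP => i; apply/existsP; exists (i, i); rewrite eqxx index_edge_lt.
Qed.

Lemma ltn_stopping_time k : (k < stopping_time l) = ~~ covering l k.
Proof.
have has_cov : has (covering l) (iota 0 (n * n).+1).
  by apply/hasP; exists (n * n); rewrite ?mem_iota ?add0n ?ltnSn ?covering_full.
have stop_le : stopping_time l <= n * n.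
  by rewrite -ltnS -[(n * n).+1](size_iota 0) -has_find.
have cov_stop : covering l (stopping_time l).
  by have := nth_find 0 has_cov; rewrite nth_iota.
apply/idP/idP => [k_lt | /negP ncov].
  have k_le : k < (n * n).+1 by rewrite ltnS (leq_trans (ltnW k_lt)).
  by have := before_find 0 k_lt; rewrite nth_iota // add0n => ->.
rewrite ltnNge; apply/negP => le_stop_k; apply: ncov.
by case/andP: cov_stop => *; apply/andP; split; apply: covered_by_mono le_stop_k _.
Qed.

Lemma covered_by_last p (M : {set edge n}) e :
    (forall i, exists2 x, x \in M & p x = i) ->
    {in M :\ e, forall x, index x l < index e l} ->
  covered_by p l (index e l) = ~~ [forall x in line p e, index e l < index x l].
Proof.
move=> p_onto e_last; apply/idP/idP => [/forallP/(_ (p e))/existsP[x] | ].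
  case/andP=> /eqP px x_lt; apply/forall_inPn; exists x; last by rewrite -leqNgt ltnW.
  by rewrite inE px eqxx; apply: contraTneq x_lt => ->; rewrite ltnn.
case/forall_inPn => x; rewrite inE -leqNgt => /andP[/eqP px xe] x_le.
have x_lt : index x l < index e l.
  by rewrite ltn_neqAle x_le andbT; apply: contra_neq xe => /index_edge_inj.
apply/forallP => i; apply/existsP; have [<- | pe_i] := eqVneq (p e) i.
  by exists x; rewrite px eqxx.
have [y yM pyi] := p_onto i; exists y; rewrite pyi eqxx e_last //.
by rewrite !inE yM andbT; apply: contra_neq pe_i => <-.
Qed.

End StoppingTime.

Definition last_with_isolated_end n (M : {set edge n}) (e : edge n) (l : seq (edge n)) :=
  separated (M :\ e) (line fst e) e l || separated (M :\ e) (line snd e) e l.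

Section LastEdgeOfMatching.
Variables (m : nat) (l : seq (edge m.+1)) (s : {perm 'I_m.+1}).
Hypothesis l_perm : perm_eq l (enum {: edge m.+1}).
Local Notation M := (matching_of s).

(* When the last edge [e] of [M] arrives, every vertex except the endpoints of [e] is already
   covered by [M :\ e]; so [M] is in the stopped graph iff one endpoint of [e] has no earlier
   edge.  Exactly one [e] is last, whence the sum. *)
Lemma subset_stopped_graph :
  (M \subset stopped_graph l) = \sum_(e in M) last_with_isolated_end M e l :> nat.
Proof.
pose i0 := [arg max_(i > ord0) index (i, s i) l]; pose e := (i0, s i0).
have eM : e \in M by rewrite mem_matching_of.
have e_last : {in M :\ e, forall x, index x l < index e l}.
  move=> [i j]; rewrite !inE mem_matching_of /= => /andP[xe /eqP sij]; subst j.
  rewrite ltn_neqAle; apply/andP; split.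
    by apply: contra_neq xe => /(index_edge_inj l_perm).
  by rewrite /e /i0; case: arg_maxnP => // k _; apply.
have sep_e U : separated (M :\ e) U e l = [forall x in U, index e l < index x l].
  by rewrite /separated; have /forall_inP -> := e_last.
rewrite (bigD1 e) //= big1 ?addn0 => [|e' /andP[e'M e'e]]; last first.
  have eMe' : e \in M :\ e' by rewrite !inE eq_sym e'e eM.
  suff sep_e' U : separated (M :\ e') U e' l = false by rewrite /last_with_isolated_end !sep_e'.
  apply/negbTE; rewrite negb_and; apply/orP; left; apply/forall_inPn; exists e => //.
  by rewrite -leqNgt ltnW // e_last // !inE e'e e'M.
have -> : (M \subset stopped_graph l) = (index e l < stopping_time l).
  apply/subsetP/idP => [sub | e_lt x xM]; first by have := sub e eM; rewrite inE.
  rewrite inE; apply: leq_ltn_trans e_lt.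
  by have [-> // | xe] := eqVneq x e; apply/ltnW/e_last; rewrite !inE xe.
rewrite /last_with_isolated_end ltn_stopping_time // negb_and !sep_e.
rewrite !(covered_by_last l_perm _ e_last) ?negbK // => i.
  by exists ((s^-1)%g i, i); rewrite // mem_matching_of /= permKV.
by exists (i, s i); rewrite // mem_matching_of.
Qed.

End LastEdgeOfMatching.

Local Open Scope ring_scope.

(* The probability that, in a uniform order of [a + b + 1] items, a given item comes after [a]
   given items and before the remaining [b]. *)
Definition pivot_ratio a b : rat := (a`! * b`!)%:R / ((a + b).+1`!)%:R.

Lemma pivot_ratio_bin a b : a.+1%:R * pivot_ratio a b = ('C((a + b).+1, a.+1)%:R)^-1.
Proof.
have binE : ('C((a + b).+1, a.+1) * ((a.+1)`! * b`!) = ((a + b).+1)`!)%N.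
  by rewrite -(bin_fact (leq_addr b a.+1)) addSn subSS addKn.
have pos (k : nat) : (0 < k)%N -> k%:R != 0 :> rat by rewrite pnatr_eq0 -lt0n.
rewrite /pivot_ratio -binE factS -mulnA !natrM; field.
by rewrite nat1r !pos ?fact_gt0 ?bin_gt0 ?ltnS ?leq_addr.
Qed.

Lemma count_separatedE (T : finType) (S U : {set T}) e :
    e \notin S -> e \notin U -> [disjoint S & U] ->
  (count (separated S U e) (permutations (enum T)))%:R = #|T|`!%:R * pivot_ratio #|S| #|U|.
Proof.
move=> eS eU SU; rewrite /pivot_ratio mulrA -natrM -(count_separated eS eU SU) natrM mulfK //.
by rewrite pnatr_eq0 -lt0n fact_gt0.
Qed.

Lemma separatedU (T : finType) (S U1 U2 : {set T}) e l :
  separated S U1 e l && separated S U2 e l = separated S (U1 :|: U2) e l.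
Proof.
rewrite /separated andbACA andbb; congr andb.
apply/andP/forall_inP => [[/forall_inP U1e /forall_inP U2e] x | Ue].
  by rewrite inE => /orP[/U1e | /U2e].
by split; apply/forall_inP => x xU; apply: Ue; rewrite inE xU ?orbT.
Qed.

Lemma disjoint_line n (p : edge n -> 'I_n) (A : {set edge n}) e :
  {in A &, injective p} -> e \in A -> [disjoint A :\ e & line p e].
Proof.
move=> p_inj eA; apply/pred0P => x /=; rewrite !inE.
by apply/negP => /and3P[/andP[xe xA] /eqP /p_inj -> //]; rewrite eqxx.
Qed.

Section LineCardinals.
Variables (m : nat) (e : edge m.+1).

Lemma card_line_fst : #|line fst e| = m.
Proof.
have : #|setX [set e.1] [set: 'I_m.+1]| = m.+1 by rewrite cardsX cards1 cardsT card_ord mul1n.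
rewrite (cardsD1 e) !inE eqxx /= => -[card_e]; apply: etrans card_e; apply: eq_card => x.
by rewrite !inE andbT andbC.
Qed.

Lemma card_line_snd : #|line snd e| = m.
Proof.
have : #|setX [set: 'I_m.+1] [set e.2]| = m.+1 by rewrite cardsX cards1 cardsT card_ord muln1.
rewrite (cardsD1 e) !inE eqxx /= => -[card_e]; apply: etrans card_e; apply: eq_card => x.
by rewrite !inE andbC.
Qed.

Lemma disjoint_line_fst_snd : [disjoint line fst e & line snd e].
Proof.
apply/pred0P => -[i j] /=; rewrite !inE /=.
by apply/negP => /andP[/andP[/eqP -> _] /andP[/eqP -> /negP]]; rewrite -surjective_pairing.
Qed.

End LineCardinals.

Section CountMatchingInStoppedGraph.
Variables (m : nat) (s : {perm 'I_m.+1}).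
Local Notation n := m.+1.
Local Notation M := (matching_of s).
Local Notation orders := (permutations (enum {: edge n})).

Lemma card_matching_of : #|M| = n.
Proof. by rewrite card_imset ?card_ord // => i j []. Qed.

Lemma fst_inj_matching : {in M &, injective fst}.
Proof.
move=> [i j] [i' j']; rewrite !mem_matching_of /= => /eqP-> /eqP-> ii'.
by rewrite ii'.
Qed.

Lemma snd_inj_matching : {in M &, injective snd}.
Proof.
move=> [i j] [i' j']; rewrite !mem_matching_of /= => /eqP-> /eqP-> /perm_inj ii'.
by rewrite ii'.
Qed.

Lemma count_last_with_isolated_end e : e \in M ->
  (count (last_with_isolated_end M e) orders)%:R
  = ((n * n)%N`!)%:R * (pivot_ratio m m *+ 2 - pivot_ratio m (m + m)%N) :> rat.
Proof.
move=> eM.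
have card_Me : #|M :\ e| = m by have := cardsD1 e M; rewrite eM card_matching_of => -[].
have count_sep (U : {set edge n}) : e \notin U -> [disjoint M :\ e & U] ->
    (count (separated (M :\ e) U e) orders)%:R = ((n * n)%N`!)%:R * pivot_ratio m #|U| :> rat.
  by move=> eU MU; rewrite count_separatedE ?card_Me ?card_prod ?card_ord // !inE eqxx.
have e_line p : e \notin line p e by rewrite !inE !eqxx.
have Me_fst := disjoint_line fst_inj_matching eM.
have Me_snd := disjoint_line snd_inj_matching eM.
have card_lines : #|line fst e :|: line snd e| = (m + m)%N.
  rewrite cardsU (disjoint_setI0 (disjoint_line_fst_snd e)) cards0 subn0.
  by rewrite card_line_fst card_line_snd.
pose sep U := separated (M :\ e) U e.
have countUI : (count (last_with_isolated_end M e) orders)%:R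
    = (count (sep (line fst e)) orders)%:R + (count (sep (line snd e)) orders)%:R
      - (count (sep (line fst e :|: line snd e)) orders)%:R :> rat.
  apply: (canRL (addrK _)); rewrite -!natrD -(count_predUI (sep (line fst e))).
  by rewrite (eq_count (separatedU _ _ _ e)).
have e_lines : e \notin line fst e :|: line snd e by rewrite inE negb_or !e_line.
have Me_lines : [disjoint M :\ e & line fst e :|: line snd e].
  by rewrite -setI_eq0 setIUr (disjoint_setI0 Me_fst) (disjoint_setI0 Me_snd) setU0.
rewrite countUI !count_sep ?card_line_fst ?card_line_snd ?card_lines ?e_line //.
by rewrite mulrBr mulrnAr.
Qed.

Lemma count_subset_stopped_graph :
  (count (fun l => M \subset stopped_graph l) orders)%:R
  = (n * (n * n)`!)%N%:R * (pivot_ratio m m *+ 2 - pivot_ratio m (m + m)%N) :> rat.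
Proof.
have subsetE l : l \in orders -> (M \subset stopped_graph l : nat) =
    (\sum_(e in M) last_with_isolated_end M e l)%N.
  by rewrite mem_permutations => lT; rewrite (subset_stopped_graph s lT).
rewrite count_sum (eq_big_seq _ subsetE) exchange_big /= natr_sum.
under eq_bigr => e eM do rewrite -count_sum count_last_with_isolated_end //.
rewrite sumr_const card_matching_of natrM; ring.
Qed.

End CountMatchingInStoppedGraph.

Local Close Scope ring_scope.

Lemma sum_num_pm n :
  \sum_(o : ordering n | is_ordering o) num_pm_in (G_omega o)
  = \sum_(s : {perm 'I_n}) count (fun l => matching_of s \subset stopped_graph l)
                                 (permutations (enum {: edge n})).
Proof.
rewrite (eq_bigr (fun o => num_pm_in (stopped_graph (fgraph o)))) => [|o o_inj]; last first.
  by rewrite G_omegaE.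
rewrite (sum_injective_ffun (fun l => num_pm_in (stopped_graph l))) ?card_prod ?card_ord //.
rewrite (eq_bigr _ (fun l _ => num_pm_inE _)) exchange_big /=.
by apply: eq_bigr => s _; rewrite count_sum.
Qed.

Theorem corollary1 (n : nat) (hn : 1 <= n) :
  expected_pm n =
  ((n`!)%:R * (2 / ('C(2 * n - 1, n))%:R - 1 / ('C(3 * n - 2, n))%:R))%R.
Proof.
case: n hn => [//|m] _.
have card_orderings : #|[pred o : ordering m.+1 | is_ordering o]| = (m.+1 * m.+1)`!.
  by rewrite card_injective_ffun ?card_prod ?card_ord.
rewrite /expected_pm card_orderings -natr_sum sum_num_pm natr_sum.
rewrite (eq_bigr _ (fun s _ => count_subset_stopped_graph s)) sumr_const card_Sn.
have -> : 2 * m.+1 - 1 = (m + m).+1 by lia.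
have -> : 3 * m.+1 - 2 = (m + (m + m)).+1 by lia.
rewrite div1r -!pivot_ratio_bin natrM.
by field; rewrite pnatr_eq0 -lt0n fact_gt0.
Qed.
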